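(* If $\pi\in\mathfrak{S}_m$ is a non-overlapping permutation, then $\pi$ and its reversal $\pi^R=\pi_m\pi_{m-1}\cdots\pi_1$ are super-strongly c-Wilf equivalent.
   Context: The standardization $\operatorname{st}(w)$ of a word of distinct integers replaces its smallest entry by 1, the next smallest by 2, etc. For $\pi\in\mathfrak{S}_m$ and $\sigma\in\mathfrak{S}_n$, $\operatorname{Em}(\pi,\sigma)=\{i\in[n-m+1]:\operatorname{st}(\sigma_i\cdots\sigma_{i+m-1})=\pi\}$. For a set $S$ of positive integers, $a^\pi_{n,S}$ is the number of $\sigma\in\mathfrak{S}_n$ with $\operatorname{Em}(\pi,\sigma)=S$; $\pi,\tau$ are super-strongly c-Wilf equivalent if $a^\pi_{n,S}=a^\tau_{n,S}$ for all $n,S$. The overlap set is $\mathcal{O}_\pi=\{i\in[m-1]:\operatorname{st}(\pi_{i+1}\cdots\pi_m)=\operatorname{st}(\pi_1\cdots\pi_{m-i})\}$; $\pi$ is non-overlapping if $\mathcal{O}_\pi=\{m-1\}$. *)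

From mathcomp Require Import all_boot all_fingroup.
Set Implicit Arguments. Unset Strict Implicit. Unset Printing Implicit Defensive.

(* Permutations of [m] are 'S_m = {perm 'I_m}; entries are 0-based values,
   word positions are 1-based as in the paper. *)

Definition st (w : seq nat) : seq nat :=
  [seq count (fun y => y < x) w | x <- w].

Definition word n (s : 'S_n) : seq nat := [seq val (s i) | i <- enum 'I_n].

Definition Em m n (pi : 'S_m) (sigma : 'S_n) : seq nat :=
  [seq i <- iota 1 (n - m + 1) |
     st (take m (drop i.-1 (word sigma))) == word pi].

Definition seteqb (s t : seq nat) : bool := all (mem t) s && all (mem s) t.

(* a^pi_{n,S}: number of sigma in S_n with Em(pi,sigma) = S (S a finite set of
   positive integers, given by a list) *)
Definition a_cnt m (pi : 'S_m) n (S : seq nat) : nat :=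
  #|[set sigma : 'S_n | seteqb (Em pi sigma) S]|.

Definition super_strongly_cWilf m (pi tau : 'S_m) : Prop :=
  forall n (S : seq nat), all (fun i => 0 < i) S -> a_cnt pi n S = a_cnt tau n S.

Definition overlaps m (pi : 'S_m) : seq nat :=
  [seq i <- iota 1 m.-1 |
     st (drop i (word pi)) == st (take (m - i) (word pi))].

Definition non_overlapping m (pi : 'S_m) : Prop := overlaps pi = [:: m.-1].

Lemma rev_perm_inj m (pi : 'S_m) : injective (fun j : 'I_m => pi (rev_ord j)).
Proof. by move=> i j /= /perm_inj /rev_ord_inj. Qed.

Definition rev_perm m (pi : 'S_m) : 'S_m := perm (@rev_perm_inj m pi).

From mathcomp Require Import all_boot all_fingroup zify.
Set Implicit Arguments. Unset Strict Implicit. Unset Printing Implicit Defensive.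

(* Let [cnt_sup p A] be the number of sigma with an occurrence of p starting at every
   position of A.  The counts [cnt_eq] of exact Em-sets are recovered from these by
   Moebius inversion over supersets, so it suffices to show that [cnt_sup] takes the
   same values for pi and its reversal piR.  As pi is non-overlapping, two
   occurrences of pi (or of piR) share at most one entry, so both counts vanish unless
   the elements of A are pairwise at distance >= m-1.  Such an A splits into clusters,
   arithmetic progressions of step m-1 whose windows chain into one block; reversing
   the entries of a block turns the occurrences of pi at a cluster into occurrences of
   piR at the mirror-image cluster, which is the same cluster, and touches no other
   window.  Reversing the blocks one at a time is the required bijection. *)

Lemma size_word n (s : 'S_n) : size (word s) = n.
Proof. by rewrite size_map size_enum_ord. Qed.

Lemma nth_word n (s : 'S_n) (i : 'I_n) : nth 0 (word s) i = s i.
Proof. by rewrite (nth_map i) ?size_enum_ord // nth_ord_enum. Qed.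

Lemma word_rev_perm m (p : 'S_m) : word (rev_perm p) = rev (word p).
Proof.
apply: (@eq_from_nth _ 0); first by rewrite size_rev !size_word.
move=> i; rewrite size_word => lt_im; rewrite nth_rev size_word //.
have -> : m - i.+1 = rev_ord (Ordinal lt_im) by [].
by rewrite -[i]/(val (Ordinal lt_im)) !nth_word permE.
Qed.

Lemma size_st w : size (st w) = size w.
Proof. exact: size_map. Qed.

Lemma st_rev w : st (rev w) = rev (st w).
Proof. by rewrite /st map_rev; congr rev; apply: eq_map => x; rewrite count_rev. Qed.

Lemma st_map_mono (f : nat -> nat) w :
  {in w &, forall x y, (f x < f y) = (x < y)} -> st (map f w) = st w.
Proof.
move=> f_mono; rewrite /st -map_comp; apply/eq_in_map => x xw /=.
by rewrite count_map; apply: eq_in_count => y yw; apply: f_mono.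
Qed.

Lemma count_ltn_mono w :
  {in w &, forall x y, (count (fun z => z < x) w < count (fun z => z < y) w) = (x < y)}.
Proof.
have count_ltn_split x y : x <= y -> count (fun z => z < y) w =
    count (fun z => z < x) w + count (fun z => x <= z < y) w.
  by move=> le_xy; elim: w => //= z w ->; case: (ltnP z x); case: (ltnP z y); lia.
have lt_count x y : x \in w -> x < y -> count (fun z => z < x) w < count (fun z => z < y) w.
  move=> xw lt_xy; rewrite (count_ltn_split _ _ (ltnW lt_xy)) -addn1 leq_add2l.
  by rewrite -has_count; apply/hasP; exists x; rewrite ?leqnn.
move=> x y xw yw; case: (ltngtP x y) => [lt_xy | lt_yx | ->]; last exact: ltnn.
- exact: lt_count.
- by apply/negbTE; rewrite -leqNgt ltnW // lt_count.
Qed.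

Lemma st_drop k w : st (drop k (st w)) = st (drop k w).
Proof.
rewrite [X in drop k X]/st -map_drop st_map_mono // => x y xw yw.
by apply: count_ltn_mono; [exact: mem_drop xw | exact: mem_drop yw].
Qed.

Lemma st_take k w : st (take k (st w)) = st (take k w).
Proof.
rewrite [X in take k X]/st -map_take st_map_mono // => x y xw yw.
by apply: count_ltn_mono; [exact: mem_take xw | exact: mem_take yw].
Qed.

(* Positions are 0-based here: [occ p s j] iff [j.+1 \in Em p s] (see [mem_Em]). *)
Definition occ m n (p : 'S_m) (s : 'S_n) (j : nat) : bool :=
  st (take m (drop j (word s))) == word p.

Section Occurrences.

Variables m n : nat.
Hypothesis m_gt0 : 0 < m.

Lemma occ_bound (p : 'S_m) (s : 'S_n) j : occ p s j -> j + m <= n.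
Proof.
move/eqP/(congr1 size); rewrite size_st size_take size_drop !size_word.
case: ltnP; lia.
Qed.

Lemma occE (p : 'S_m) (s : 'S_n) j :
  occ p s j = (j + m <= n) && (st [seq nth 0 (word s) i | i <- iota j m] == word p).
Proof.
have [le_jmn | lt_njm] := leqP (j + m) n; last first.
  by apply/negP => /occ_bound; rewrite leqNgt lt_njm.
by rewrite map_nth_iota // size_word leq_subRL // (leq_trans _ le_jmn) ?leq_addr.
Qed.

Lemma overlaps_rev_perm (p : 'S_m) : overlaps (rev_perm p) = overlaps p.
Proof.
apply: eq_in_filter => i; rewrite mem_iota => i_range.
rewrite word_rev_perm drop_rev take_rev size_word !st_rev (inj_eq (can_inj revK)).
by rewrite (_ : m - (m - i) = i) 1?eq_sym //; lia.
Qed.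

Lemma occ_overlaps (p : 'S_m) (s : 'S_n) a e :
  occ p s a -> occ p s (a + e) -> 0 < e < m -> e \in overlaps p.
Proof.
rewrite !occE => /andP[_ /eqP occ_a] /andP[_ /eqP occ_ae] e_range.
rewrite mem_filter mem_iota (_ : 1 <= e < 1 + m.-1); last lia.
rewrite andbT -{1}occ_a st_drop -occ_ae st_take -map_drop -map_take.
by rewrite drop_iota take_iota (_ : minn (m - e) m = m - e) //; lia.
Qed.

Lemma non_overlapping_occ_gap (p : 'S_m) (s : 'S_n) a b :
  non_overlapping p -> occ p s a -> occ p s b -> a < b -> m.-1 <= b - a.
Proof.
move=> no occ_a occ_b lt_ab; case: (ltnP (b - a) m) => [lt_bam|]; last lia.
have : b - a \in overlaps p.
  apply: (occ_overlaps occ_a); first by rewrite subnKC // ltnW.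
  by rewrite subn_gt0 lt_ab.
by rewrite no inE => /eqP ->.
Qed.

End Occurrences.

Lemma non_overlapping_gt1 m (p : 'S_m) : non_overlapping p -> 1 < m.
Proof.
move=> no; have : m.-1 \in overlaps p by rewrite no inE.
by rewrite mem_filter mem_iota => /andP[_]; lia.
Qed.

Definition mirror lo hi x := if lo <= x <= hi then lo + hi - x else x.

Lemma mirrorK lo hi : involutive (mirror lo hi).
Proof.
by move=> x; rewrite /mirror; case: (boolP (lo <= x <= hi)) => x_in; case: ifP; lia.
Qed.

Lemma mirror_perm n lo hi : hi < n -> {r : 'S_n | forall i, val (r i) = mirror lo hi i}.
Proof.
move=> lt_hin; have mirror_lt (i : 'I_n) : mirror lo hi i < n.
  by have := ltn_ord i; rewrite /mirror; case: ifP; lia.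
pose f i := Ordinal (mirror_lt i).
have f_inj : injective f.
  by move=> i j /(congr1 (mirror lo hi \o val)); rewrite /= !mirrorK => /val_inj.
by exists (perm f_inj) => i; rewrite permE.
Qed.

Lemma nth_word_mulg n (r s : 'S_n) k (lt_kn : k < n) :
  nth 0 (word (r * s)%g) k = nth 0 (word s) (r (Ordinal lt_kn)).
Proof. by rewrite -[k]/(val (Ordinal lt_kn)) !nth_word permM. Qed.

Section Mirror.

Variables (m n : nat) (r : 'S_n) (lo hi : nat).
Hypotheses (m_gt0 : 0 < m) (r_mirror : forall i, val (r i) = mirror lo hi i).

Lemma occ_mirror_out (p : 'S_m) (s : 'S_n) j :
  (j + m <= lo) || (hi < j) -> occ p (r * s)%g j = occ p s j.
Proof.
move=> j_out; rewrite !occE //; case: (leqP (j + m) n) => //= le_jmn.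
congr (st _ == _); apply/eq_in_map => x; rewrite mem_iota => x_in.
have lt_xn : x < n by lia.
by rewrite (nth_word_mulg _ _ lt_xn) r_mirror /mirror /=; case: ifP => //; lia.
Qed.

Lemma occ_mirror_in (p : 'S_m) (s : 'S_n) h j :
  hi = h + m.-1 -> hi < n -> lo <= j <= h ->
  occ (rev_perm p) (r * s)%g j = occ p s (lo + h - j).
Proof.
move=> def_hi lt_hin j_in.
rewrite !occE // (_ : j + m <= n) 1?(_ : lo + h - j + m <= n) /=; try lia.
rewrite word_rev_perm -(inj_eq (can_inj revK)) -st_rev revK; congr (st _ == _).
apply: (@eq_from_nth _ 0); rewrite ?size_rev !size_map !size_iota // => t lt_tm.
rewrite nth_rev ?size_map ?size_iota // !(nth_map 0) ?size_iota; try lia.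
rewrite !nth_iota; try lia.
have lt_n : j + (m - t.+1) < n by lia.
rewrite (nth_word_mulg _ _ lt_n) r_mirror /mirror /= (_ : lo <= _ <= hi); last lia.
by congr nth; lia.
Qed.

End Mirror.

Lemma progression_cluster (P : pred nat) d h : 0 < d -> P h ->
    (forall a b, P a -> P b -> a < b -> d <= b - a) ->
  exists lo, [/\ lo <= h, forall a, lo <= a <= h -> P a = (d %| a - lo)
               & forall a, P a -> a < lo -> a + d < lo].
Proof.
move=> d_gt0 Ph gap.
pose Q s := (s * d <= h) && all (fun t => P (h - t * d)) (iota 0 s.+1).
have Q0 : Q 0 by rewrite /Q mul0n /= subn0 Ph.
have Q_le s : Q s -> s <= h by case/andP => ? _; nia.
case: (ex_maxnP (ex_intro _ 0 Q0) Q_le) => s /andP[le_sdh /allP P_prog] max_s.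
pose lo := h - s * d.
have P_on_prog a : lo <= a <= h -> d %| a - lo -> P a.
  move=> a_in /dvdnP[t def_t]; have le_ts : t <= s by nia.
  rewrite (_ : a = h - (s - t) * d); last by rewrite mulnBl; nia.
  by apply: P_prog; rewrite mem_iota; lia.
have Plo : P lo by apply: P_on_prog; rewrite ?subnn ?dvdn0 //; lia.
exists lo; split=> [|a a_in|a Pa lt_alo]; first lia.
  apply/idP/idP => [Pa|]; last exact: P_on_prog.
  have := divn_eq (a - lo) d; have := ltn_mod (a - lo) d.
  have : d %| (a - lo) %/ d * d := dvdn_mull _ (dvdnn d).
  move: ((a - lo) %/ d * d) ((a - lo) %% d) => x y dvd_x lt_yd def_a.
  have Px : P (lo + x) by apply: P_on_prog; rewrite ?addKn //; lia.
  case: (posnP y) => [y0 | y_gt0]; last by have := gap _ a Px Pa; lia.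
  by rewrite def_a y0 addn0.
have := gap a lo Pa Plo lt_alo; rewrite leq_eqVlt => /orP[/eqP gap_eq|]; last lia.
have Q_succ : Q s.+1.
  apply/andP; split; first by rewrite mulSn; lia.
  apply/allP => t; rewrite mem_iota => t_range.
  case: (ltnP t s.+1) => [lt_ts | ge_ts]; first by apply: P_prog; rewrite mem_iota; lia.
  by rewrite (_ : h - t * d = a) // (_ : t = s.+1) ?mulSn; lia.
by have := max_s _ Q_succ; rewrite ltnn.
Qed.

Lemma subset_set_in (T : finType) (A : {set T}) (P Q : pred T) :
  {in A, P =1 Q} -> (A \subset [set x | P x]) = (A \subset [set x | Q x]).
Proof.
by move=> eqPQ; apply/subsetP/subsetP => sub x xA; have := sub x xA; rewrite !inE eqPQ.
Qed.

Lemma subset_set_involution (T : finType) (f : T -> T) (A : {set T}) (P : pred T) :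
    {in A, forall x, f x \in A} -> {in A, involutive f} ->
  (A \subset [set x | P (f x)]) = (A \subset [set x | P x]).
Proof.
move=> fA fK; apply/subsetP/subsetP => sub x xA; have := sub _ (fA x xA); rewrite !inE //.
by rewrite fK.
Qed.

Lemma superset_sum_inj (T : finType) (f g : {set T} -> nat) :
    (forall A : {set T}, \sum_(B : {set T} | A \subset B) f B =
                         \sum_(B : {set T} | A \subset B) g B) ->
  f =1 g.
Proof.
move=> eq_sums A; have [k] := ubnP #|~: A|; elim: k A => // k IH A /ltnSE le_k.
have := eq_sums A; rewrite (bigD1 A) // [RHS](bigD1 A) //=.
rewrite (eq_bigr g) => [/addIn // | B /andP[AB BA]].
apply: IH; apply: leq_trans le_k; apply: proper_card.
by rewrite properC properEneq AB eq_sym BA.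
Qed.

Section Counting.

Variables m n : nat.
Hypothesis m_gt1 : 1 < m.
Let m_gt0 : 0 < m := ltnW m_gt1.

Definition Em_set (p : 'S_m) (s : 'S_n) : {set 'I_n} := [set j : 'I_n | occ p s j].

Definition cnt_eq (p : 'S_m) (A : {set 'I_n}) : nat :=
  #|[set s : 'S_n | Em_set p s == A]|.

Definition cnt_sup (p : 'S_m) (A : {set 'I_n}) : nat :=
  #|[set s : 'S_n | A \subset Em_set p s]|.

Definition cnt_sup_mixed (p : 'S_m) (A B : {set 'I_n}) : nat :=
  #|[set s : 'S_n | (A \subset Em_set p s) && (B \subset Em_set (rev_perm p) s)]|.

Definition cluster d lo h : {set 'I_n} := [set j : 'I_n | lo <= j <= h & d %| j - lo].

Definition spaced d (A : {set 'I_n}) := {in A &, forall a b : 'I_n, a < b -> d <= b - a}.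

Lemma cnt_sup_mixed_mirror (p : 'S_m) (A B : {set 'I_n}) lo h :
    lo <= h -> m.-1 %| h - lo -> h + m <= n ->
    {in A, forall a : 'I_n, a + m <= lo} -> {in B, forall b : 'I_n, h + m <= b} ->
  cnt_sup_mixed p (A :|: cluster m.-1 lo h) B = cnt_sup_mixed p A (cluster m.-1 lo h :|: B).
Proof.
move=> le_loh dvd_hlo le_hmn A_below B_above; set K := cluster _ _ _.
have [r r_mirror] := @mirror_perm n lo (h + m.-1) ltac:(lia).
have [rK rK_mirror] := @mirror_perm n lo h ltac:(lia).
have rK_K : {in K, forall j, rK j \in K}.
  move=> j; rewrite !inE rK_mirror /mirror => /andP[j_in dvd_j]; rewrite j_in.
  have -> : lo + h - j - lo = h - lo - (j - lo) by lia.
  by rewrite dvdn_sub // andbT; apply/andP; split; lia.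
have rK_invol : {in K, involutive rK}.
  by move=> j _; apply: val_inj; rewrite !rK_mirror mirrorK.
rewrite /cnt_sup_mixed -[RHS](card_preimset _ (mulgI r)); apply: eq_card => s.
rewrite !inE !subUset -andbA /Em_set.
rewrite (@subset_set_in _ A (occ p (r * s)) (occ p s)); last first.
  by move=> j /A_below j_out; apply: (occ_mirror_out m_gt0 r_mirror); rewrite j_out.
rewrite (@subset_set_in _ B (occ (rev_perm p) (r * s)) (occ (rev_perm p) s)); last first.
  by move=> j /B_above j_out; apply: (occ_mirror_out m_gt0 r_mirror); apply/orP; right; lia.
rewrite (@subset_set_in _ K (occ (rev_perm p) (r * s)) (fun j => occ p s (rK j))); last first.
  move=> j; rewrite inE => /andP[j_in _] /=; rewrite rK_mirror /mirror j_in.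
  by apply: (occ_mirror_in m_gt0 r_mirror); lia.
by rewrite (subset_set_involution (fun j : 'I_n => occ p s j) rK_K rK_invol).
Qed.

Lemma cnt_sup_mixed_eq0 (p : 'S_m) (A B : {set 'I_n}) (j : 'I_n) :
  j \in A :|: B -> n < j + m -> cnt_sup_mixed p A B = 0.
Proof.
move=> jAB lt_njm; apply: eq_card0 => s; rewrite !inE.
apply/negP => /andP[/subsetP subA /subsetP subB].
have : occ p s j || occ (rev_perm p) s j.
  by case/setUP: jAB => [/subA | /subB]; rewrite inE => ->; rewrite ?orbT.
by case/orP => /(occ_bound m_gt0); lia.
Qed.

Lemma spaced_top_cluster d (A : {set 'I_n}) (h : 'I_n) :
    0 < d -> spaced d A -> h \in A -> {in A, forall j : 'I_n, j <= h} ->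
  exists lo, [/\ lo <= h, d %| h - lo, A = [set a in A | a < lo] :|: cluster d lo h
               & {in A, forall a : 'I_n, a < lo -> a + d < lo}].
Proof.
move=> d_gt0 A_sp hA le_h.
pose P x := x \in map val (enum A).
have P_val (j : 'I_n) : P j = (j \in A) by rewrite /P (mem_map val_inj) mem_enum.
have P_gap a b : P a -> P b -> a < b -> d <= b - a.
  by rewrite /P => /mapP[a' + ->] /mapP[b' + ->]; rewrite !mem_enum; apply: A_sp.
have Ph : P h by rewrite P_val.
have [lo [le_loh P_cluster P_below]] := progression_cluster d_gt0 Ph P_gap.
exists lo; split=> //; first by rewrite -P_cluster ?leqnn ?le_loh.
  apply/setP => j; rewrite !inE -P_val; case: (ltnP j lo) => [lt_jlo | le_loj].
    by rewrite andbT /= orbF.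
  rewrite andbF /=; have [le_jh | lt_hj] := leqP j h; first by rewrite P_cluster ?le_loj.
  by apply/negbTE; apply: contraTN lt_hj; rewrite P_val -leqNgt => /le_h.
by move=> a; rewrite -P_val => /P_below.
Qed.

(* Induction on #|A|: mirror the topmost cluster of A, which moves it into B. *)
Lemma cnt_sup_mixed_spaced (p : 'S_m) (A B : {set 'I_n}) :
    spaced m.-1 A -> {in A & B, forall a b : 'I_n, a + m <= b} ->
  cnt_sup_mixed p A B = cnt_sup_mixed p set0 (A :|: B).
Proof.
have [k] := ubnP #|A|; elim: k A B => // k IH A B /ltnSE le_Ak A_sp A_B.
have [-> | [a0 a0A]] := set_0Vmem A; first by rewrite set0U.
case: (arg_maxnP val a0A) => h hA h_max; have {}hA : h \in A by [].
have hAB : h \in A :|: B by rewrite inE hA.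
have [lt_nhm | le_hmn] := ltnP n (h + m).
  by rewrite (cnt_sup_mixed_eq0 _ hAB) // (@cnt_sup_mixed_eq0 _ _ _ h) // set0U.
have le_h : {in A, forall j : 'I_n, j <= h} by move=> j jA; apply: h_max.
have [lo [le_loh dvd_hlo def_A below_lo]] :=
  spaced_top_cluster (ltac:(lia) : 0 < m.-1) A_sp hA le_h.
set A' := [set a in A | a < lo] in def_A *.
have A'_below : {in A', forall a : 'I_n, a + m <= lo}.
  by move=> a; rewrite inE => /andP[/below_lo]; lia.
have lt_A'A : #|A'| < #|A|.
  apply: proper_card; rewrite properE; apply/andP; split.
    by apply/subsetP => a; rewrite inE => /andP[].
  by apply/subsetPn; exists h; rewrite // inE hA -leqNgt le_loh.
rewrite {1}def_A cnt_sup_mixed_mirror // => [|b /(A_B h _ hA) //].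
rewrite IH ?setUA -?def_A //.
- exact: leq_trans lt_A'A le_Ak.
- by move=> a b; rewrite !inE => /andP[aA _] /andP[bA _]; apply: A_sp.
move=> a b aA'; have /andP[aA _] : (a \in A) && (a < lo) by move: aA'; rewrite inE.
case/setUP => [| /(A_B a _ aA) //]; rewrite inE => /andP[/andP[le_lob _] _].
by have := A'_below a aA'; lia.
Qed.

Lemma cnt_sup_sum (p : 'S_m) (A : {set 'I_n}) :
  cnt_sup p A = \sum_(B : {set 'I_n} | A \subset B) cnt_eq p B.
Proof.
rewrite /cnt_sup -sum1_card (partition_big (Em_set p) (fun B => A \subset B)) => [|s];
  last by rewrite inE.
apply: eq_bigr => B AB; rewrite /cnt_eq -sum1_card; apply: eq_bigl => s.
by rewrite !inE; case: eqP => [->|]; rewrite ?AB ?andbF.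
Qed.

Lemma spaced_of_cnt_sup_gt0 (p : 'S_m) (A : {set 'I_n}) :
  non_overlapping p -> 0 < cnt_sup p A -> spaced m.-1 A.
Proof.
move=> no; rewrite card_gt0 => /set0Pn[s]; rewrite inE => /subsetP sub a b aA bA.
have := sub a aA; have := sub b bA; rewrite !inE => occ_b occ_a.
exact: (non_overlapping_occ_gap m_gt0 no occ_a occ_b).
Qed.

Lemma cnt_sup_rev_perm (p : 'S_m) (A : {set 'I_n}) :
  non_overlapping p -> cnt_sup p A = cnt_sup (rev_perm p) A.
Proof.
move=> no; have no_rev : non_overlapping (rev_perm p).
  by rewrite /non_overlapping overlaps_rev_perm.
have eq_spaced : spaced m.-1 A -> cnt_sup p A = cnt_sup (rev_perm p) A.
  move=> A_sp; have -> : cnt_sup p A = cnt_sup_mixed p A set0.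
    by apply: eq_card => s; rewrite !inE sub0set andbT.
  have -> : cnt_sup (rev_perm p) A = cnt_sup_mixed p set0 A.
    by apply: eq_card => s; rewrite !inE sub0set.
  by rewrite cnt_sup_mixed_spaced ?setU0 // => a b _; rewrite inE.
case: (posnP (cnt_sup p A)) => [cnt0 | /(spaced_of_cnt_sup_gt0 no)/eq_spaced //].
case: (posnP (cnt_sup (rev_perm p) A)) => [-> // |].
by move/(spaced_of_cnt_sup_gt0 no_rev)/eq_spaced.
Qed.

Lemma cnt_eq_rev_perm (p : 'S_m) (A : {set 'I_n}) :
  non_overlapping p -> cnt_eq p A = cnt_eq (rev_perm p) A.
Proof.
move=> no; apply: (@superset_sum_inj _ (cnt_eq p)) => {}A.
by rewrite -!cnt_sup_sum cnt_sup_rev_perm.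
Qed.

Lemma mem_Em (p : 'S_m) (s : 'S_n) x : (x \in Em p s) = (0 < x) && occ p s x.-1.
Proof.
rewrite mem_filter mem_iota andbC; case: (posnP x) => [-> // | x_gt0] /=.
rewrite -/(occ p s x.-1); case occ_x: (occ p s x.-1); rewrite ?andbF // andbT.
by have := occ_bound m_gt0 occ_x; lia.
Qed.

Lemma a_cntE (p : 'S_m) (S : seq nat) : all (fun i => 0 < i) S ->
  a_cnt p n S = if all (fun i => i <= n) S then cnt_eq p [set j : 'I_n | j.+1 \in S] else 0.
Proof.
move=> /allP S_pos; case: ifP => [/allP S_le | /allPn[x xS lt_nx]]; last first.
  apply: eq_card0 => s; rewrite inE; apply/negP => /andP[_ /allP /(_ x xS)].
  rewrite /= mem_Em => /andP[x_gt0 /(occ_bound m_gt0)]; rewrite -ltnNge in lt_nx; lia.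
apply: eq_card => s; rewrite !inE; apply/andP/eqP => [[/allP EmS /allP SEm] | EmA].
  apply/setP => j; rewrite !inE; apply/idP/idP => [occ_j | jS].
    by apply: EmS; rewrite mem_Em.
  by have := SEm _ jS; rewrite /= mem_Em => /andP[].
split; apply/allP => x; rewrite /= ?mem_Em.
  move=> /andP[x_gt0 occ_x]; have lt_xn : x.-1 < n by have := occ_bound m_gt0 occ_x; lia.
  by have := EmA; move/setP/(_ (Ordinal lt_xn)); rewrite !inE /= prednK // occ_x => <-.
move=> xS; have lt_xn : x.-1 < n by have := S_pos x xS; have := S_le x xS; lia.
by have := EmA; move/setP/(_ (Ordinal lt_xn)); rewrite !inE /= prednK ?S_pos // xS => ->.
Qed.

End Counting.

Theorem corollary5p5 (m : nat) (pi : 'S_m) :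
  non_overlapping pi -> super_strongly_cWilf pi (rev_perm pi).
Proof.
move=> no n S S_pos; have m_gt1 := non_overlapping_gt1 no.
rewrite !a_cntE //; case: ifP => // _.
exact: cnt_eq_rev_perm.
Qed.
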